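(* (i) $u_2u_1s_2^{-1}s_1s_2^{-1}\subset u_1\omega^{-2}+R_5s_2^{-2}s_1^2s_2^{-1}s_1s_2^{-1}+u_1u_2u_1u_2u_1\subset U''$. (ii) $u_2u_1s_2s_1^{-1}s_2\subset u_1\omega^{2}+R_5s_2^{2}s_1^{-2}s_2s_1^{-1}s_2+u_1u_2u_1u_2u_1\subset U''$.
   Context: Let $B_3=\langle s_1,s_2\mid s_1s_2s_1=s_2s_1s_2\rangle$, $R_5=\mathbb{Z}[a,b,c,d,e,e^{-1}]$, and let $H_5$ be the quotient of the group algebra $R_5B_3$ by the relations $s_i^5=as_i^4+bs_i^3+cs_i^2+ds_i+e$ for $i=1,2$; identify $s_i$ with their images. For $i=1,2$ let $u_i$ be the $R_5$-subalgebra of $H_5$ generated by $s_i$. Set $\omega=s_2s_1^2s_2$. For $R_5$-submodules (or elements) $X_1,\dots,X_n$, $X_1\cdots X_n$ denotes the $R_5$-submodule spanned by products $x_1\cdots x_n$, $x_j\in X_j$; sums are sums of submodules; $R_5x$ is the submodule spanned by $x$. Define $U'=u_1u_2u_1+u_1\omega+u_1\omega^{-1}+u_1s_2^{-1}s_1^2s_2^{-1}u_1+u_1s_2s_1^{-2}s_2u_1+u_1s_2^2s_1^2s_2^2u_1+u_1s_2^{-2}s_1^{-2}s_2^{-2}u_1+u_1s_2s_1^{-2}s_2^2u_1+u_1s_2^{-1}s_1^2s_2^{-2}u_1+u_1s_2^{-1}s_1s_2^{-1}u_1+u_1s_2s_1^{-1}s_2u_1+u_1s_2^{-2}s_1^{-2}s_2^2u_1+u_1s_2^2s_1^2s_2^{-2}u_1+u_1s_2^2s_1^{-2}s_2^2u_1+u_1s_2^{-2}s_1^2s_2^{-2}u_1+u_1s_2^{-2}s_1s_2^{-1}u_1+u_1s_2^{-1}s_1s_2^{-2}u_1$;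 $U''=U'+u_1\omega^2+u_1\omega^{-2}+u_1s_2^{-2}s_1^2s_2^{-1}s_1s_2^{-1}u_1+u_1s_2^2s_1^{-2}s_2s_1^{-1}s_2u_1+u_1s_2s_1^{-2}s_2^2s_1^{-2}s_2^2u_1+u_1s_2^{-1}s_1^2s_2^{-2}s_1^2s_2^{-2}u_1$. *)

From HB Require Import structures.
From mathcomp Require Import all_boot all_order all_algebra.
Set Implicit Arguments. Unset Strict Implicit. Unset Printing Implicit Defensive.
Import GRing.Theory.
Local Open Scope ring_scope.

(* R-submodules of an R-algebra A are represented by predicates A -> Prop. *)
Section Submodules.
Variables (R : comUnitRingType) (A : unitAlgType R).

Definition rspan (S : A -> Prop) : A -> Prop :=
  fun x => exists (n : nat) (r : 'I_n -> R) (v : 'I_n -> A),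
    (forall i, S (v i)) /\ x = \sum_(i < n) r i *: v i.

Definition rline (x : A) : A -> Prop := rspan (fun y => y = x).

Definition mprod (X Y : A -> Prop) : A -> Prop :=
  rspan (fun z => exists x y, X x /\ Y y /\ z = x * y).

Definition msum (X Y : A -> Prop) : A -> Prop :=
  fun z => exists x y, X x /\ Y y /\ z = x + y.

Definition msub (X Y : A -> Prop) : Prop := forall z, X z -> Y z.

(* u_i : R-subalgebra generated by s = R-span of the powers s^k, k >= 0 *)
Definition usub (s : A) : A -> Prop := rspan (fun y => exists k : nat, y = s ^+ k).

Variables (s1 s2 : A).
Definition u1 := usub s1.
Definition u2 := usub s2.
Definition omega := s2 * s1 ^+ 2 * s2.

Definition u1xu1 (x : A) := mprod (mprod u1 (rline x)) u1.
Definition u1x (x : A) := mprod u1 (rline x).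

Definition U' : A -> Prop :=
  msum (mprod (mprod u1 u2) u1) (
  msum (u1x omega) (
  msum (u1x omega^-1) (
  msum (u1xu1 (s2^-1 * s1^+2 * s2^-1)) (
  msum (u1xu1 (s2 * s1^-2 * s2)) (
  msum (u1xu1 (s2^+2 * s1^+2 * s2^+2)) (
  msum (u1xu1 (s2^-2 * s1^-2 * s2^-2)) (
  msum (u1xu1 (s2 * s1^-2 * s2^+2)) (
  msum (u1xu1 (s2^-1 * s1^+2 * s2^-2)) (
  msum (u1xu1 (s2^-1 * s1 * s2^-1)) (
  msum (u1xu1 (s2 * s1^-1 * s2)) (
  msum (u1xu1 (s2^-2 * s1^-2 * s2^+2)) (
  msum (u1xu1 (s2^+2 * s1^+2 * s2^-2)) (
  msum (u1xu1 (s2^+2 * s1^-2 * s2^+2)) (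
  msum (u1xu1 (s2^-2 * s1^+2 * s2^-2)) (
  msum (u1xu1 (s2^-2 * s1 * s2^-1))
       (u1xu1 (s2^-1 * s1 * s2^-2))))))))))))))))).

Definition U'' : A -> Prop :=
  msum U' (
  msum (u1x (omega ^+ 2)) (
  msum (u1x (omega ^- 2)) (
  msum (u1xu1 (s2^-2 * s1^+2 * s2^-1 * s1 * s2^-1)) (
  msum (u1xu1 (s2^+2 * s1^-2 * s2 * s1^-1 * s2)) (
  msum (u1xu1 (s2 * s1^-2 * s2^+2 * s1^-2 * s2^+2))
       (u1xu1 (s2^-1 * s1^+2 * s2^-2 * s1^+2 * s2^-2))))))).

Definition u12121 : A -> Prop := mprod (mprod (mprod (mprod u1 u2) u1) u2) u1.

End Submodules.

Definition H5_rels (R : comUnitRingType) (A : unitAlgType R)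
  (a b c d e : R) (s1 s2 : A) : Prop :=
  [/\ e \is a GRing.unit, s1 \is a GRing.unit /\ s2 \is a GRing.unit,
      s1 * s2 * s1 = s2 * s1 * s2,
      s1 ^+ 5 = a *: s1 ^+ 4 + b *: s1 ^+ 3 + c *: s1 ^+ 2 + d *: s1 + e%:A
    & s2 ^+ 5 = a *: s2 ^+ 4 + b *: s2 ^+ 3 + c *: s2 ^+ 2 + d *: s2 + e%:A].

From HB Require Import structures.
From mathcomp Require Import all_boot all_order all_algebra zify.
Import GRing.Theory.
Local Open Scope ring_scope.
Set Implicit Arguments.
Unset Strict Implicit.
Unset Printing Implicit Defensive.

(* Everything is spanned by braid monomials, and since e is a unit the quintic
   relation expresses any power of s1 or s2 through five consecutive powers, in
   both directions.  So u1 u2 u1 u2 u1 in U' and part (i) reduce to finitely many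
   braid words with exponents in [-2, 2], which are shown to lie in the target by
   a certificate of such exponent reductions and braid identities; the identities
   are decided by the normal form of B_3 (delta^2 central and
   B_3 / <delta^2> = Z/2 * Z/3).  Part (ii) is the mirror image of (i) under
   s_i |-> s_i^-1, which maps H_5 to H_5 with the reciprocal quintic.  The
   inclusions in U'' hold summand by summand, given u1 u2 u1 u2 u1 in U'. *)

Section Submodules.
Variables (R : comUnitRingType) (A : unitAlgType R).
Implicit Types (S T X Y P : A -> Prop) (u v p q : A).

Definition submod S :=
  [/\ S 0, forall u v, S u -> S v -> S (u + v) & forall (r : R) u, S u -> S (r *: u)].

Lemma submod0 S : submod S -> S 0. Proof. by case. Qed.

Lemma submodD S u v : submod S -> S u -> S v -> S (u + v).
Proof. by case=> _ + _; apply. Qed.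

Lemma submodZ S (r : R) u : submod S -> S u -> S (r *: u).
Proof. by case=> _ _; apply. Qed.

Lemma submodB S u v : submod S -> S u -> S v -> S (u - v).
Proof. by move=> HS Su Sv; apply: submodD => //; rewrite -scaleN1r; apply: submodZ. Qed.

Lemma submod_mulLR S p q : submod S -> submod (fun u => S (p * u * q)).
Proof.
case=> S0 SD SZ; split=> [|u v|r u]; first by rewrite mulr0 mul0r.
  by rewrite mulrDr mulrDl; apply: SD.
by rewrite -scalerAr -scalerAl; apply: SZ.
Qed.

Lemma submod_mull S p : submod S -> submod (fun u => S (p * u)).
Proof.
case=> S0 SD SZ; split=> [|u v|r u]; first by rewrite mulr0.
  by rewrite mulrDr; apply: SD.
by rewrite -scalerAr; apply: SZ.
Qed.

Lemma submod_mulr S q : submod S -> submod (fun u => S (u * q)).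
Proof.
case=> S0 SD SZ; split=> [|u v|r u]; first by rewrite mul0r.
  by rewrite mulrDl; apply: SD.
by rewrite -scalerAl; apply: SZ.
Qed.

Lemma submod_rspan P : submod (rspan P).
Proof.
split=> [|_ _ [m [r [v [Pv ->]]]] [n [r' [v' [Pv' ->]]]]|k _ [n [r [v [Pv ->]]]]].
- by exists 0%N, (fun _ => 0), (fun _ => 0); rewrite big_ord0; split=> [[]|].
- exists (m + n)%N, (fun i => match split i with inl j => r j | inr j => r' j end),
    (fun i => match split i with inl j => v j | inr j => v' j end).
  split=> [i|]; first by case: (split i).
  by rewrite big_split_ord; congr (_ + _); apply: eq_bigr => i _;
    rewrite ?(unsplitK (inl i : 'I_m + 'I_n)) ?(unsplitK (inr i : 'I_m + 'I_n)).
- exists n, (fun i => k * r i), v; split=> //.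
  by rewrite scaler_sumr; apply: eq_bigr => i _; rewrite scalerA.
Qed.

Lemma mem_rspan P u : P u -> rspan P u.
Proof. by exists 1%N, (fun _ => 1), (fun _ => u); rewrite big_ord1 scale1r. Qed.

Lemma mem_rline u : rline u u.
Proof. exact: mem_rspan. Qed.

Lemma rspan_min P S : submod S -> (forall u, P u -> S u) -> msub (rspan P) S.
Proof.
move=> HS HP _ [n [r [v [Pv ->]]]].
elim/big_ind: _ => [|x y|i _]; first exact: submod0.
  exact: submodD.
by apply: submodZ => //; apply: HP.
Qed.

Lemma submod_msum S T : submod S -> submod T -> submod (msum S T).
Proof.
move=> HS HT; split=> [|_ _ [x [y [Sx [Ty ->]]]] [x' [y' [Sx' [Ty' ->]]]]|r _ [x [y [Sx [Ty ->]]]]].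
- by exists 0, 0; rewrite addr0; split; [apply: submod0|split; [apply: submod0|]].
- exists (x + x'), (y + y'); rewrite addrACA.
  by split; [apply: submodD|split; [apply: submodD|]].
- exists (r *: x), (r *: y); rewrite scalerDr.
  by split; [apply: submodZ|split; [apply: submodZ|]].
Qed.

Lemma msumL S T u : submod T -> S u -> msum S T u.
Proof. by move=> HT Su; exists u, 0; rewrite addr0; split; [|split; [apply: submod0|]]. Qed.

Lemma msumR S T u : submod S -> T u -> msum S T u.
Proof. by move=> HS Tu; exists 0, u; rewrite add0r; split; [apply: submod0|]. Qed.

Lemma msum_min S T X : submod X -> msub S X -> msub T X -> msub (msum S T) X.
Proof. by move=> HX SX TX _ [x [y [Sx [Ty ->]]]]; apply: submodD; [|apply: SX|apply: TX]. Qed.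

Lemma msubxx X : msub X X. Proof. by []. Qed.

Lemma msum_mono S S' T T' : msub S S' -> msub T T' -> msub (msum S T) (msum S' T').
Proof.
by move=> SS' TT' _ [x [y [Sx [Ty ->]]]]; exists x, y; split; [apply: SS'|split; [apply: TT'|]].
Qed.

Lemma mem_mprod X Y u v : X u -> Y v -> mprod X Y (u * v).
Proof. by move=> Xu Yv; apply: mem_rspan; exists u, v. Qed.

Lemma mprod_mono X X' Y Y' : msub X X' -> msub Y Y' -> msub (mprod X Y) (mprod X' Y').
Proof.
move=> XX' YY'; apply: rspan_min; first exact: submod_rspan.
by move=> _ [x [y [Xx [Yy ->]]]]; apply: mem_mprod; [apply: XX'|apply: YY'].
Qed.

Lemma mprod_rspan_min X P S : submod S ->
  (forall p, P p -> msub X (fun u => S (u * p))) -> msub (mprod X (rspan P)) S.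
Proof.
move=> HS XP; apply: rspan_min => // _ [x [y [Xx [Py ->]]]].
by move: y Py; apply: rspan_min; [apply: submod_mull|move=> p Pp; apply: XP].
Qed.

Lemma usub_min g S : submod S -> (forall k : nat, S (g ^+ k)) -> msub (usub g) S.
Proof. by move=> HS Sg; apply: rspan_min => // _ [k ->]. Qed.

Lemma mprod_usub_min X g S : submod S ->
  (forall k : nat, msub X (fun u => S (u * g ^+ k))) -> msub (mprod X (usub g)) S.
Proof. by move=> HS XS; apply: mprod_rspan_min => // _ [k ->]. Qed.

Lemma mprod_rline_min X g S : submod S ->
  msub X (fun u => S (u * g)) -> msub (mprod X (rline g)) S.
Proof. by move=> HS XS; apply: mprod_rspan_min => // _ ->. Qed.

End Submodules.

(* A syllable [(true, k)] stands for [s1 ^ k] and [(false, k)] for [s2 ^ k]. *)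
Definition syllable := (bool * int)%type.
Definition word := seq syllable.

Definition shift (i : int) (w : word) (j : int) : word := (true, i) :: w ++ [:: (true, j)].

Definition set_exponent (w : word) (pos : nat) (k : int) : word :=
  set_nth (true, 0%Z) w pos ((nth (true, 0%Z) w pos).1, k).

(* B_3 = < delta, rho | delta^2 = rho^3 > with delta = s1 s2 s1, rho = s1 s2 and
   delta^2 central.  A state [(n, l)] stands for delta^(2 n) times the product of
   the tokens of [rev l], [true] being delta and [false] rho; cancelling
   delta delta and rho rho rho while pushing tokens yields a normal form. *)
Definition nf_state := (int * seq bool)%type.

Definition push_token (st : nf_state) (tk : bool) : nf_state :=
  match tk, st.2 with
  | true, true :: l => (st.1 + 1, l)
  | false, false :: false :: l => (st.1 + 1, l)
  | _, l => (st.1, tk :: l)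
  end.

(* A letter is a generator (true for s1) with a sign (true for positive). *)
Definition letter := (bool * bool)%type.

Definition letter_tokens (l : letter) : seq bool :=
  match l with
  | (true, true) => [:: false; false; true]
  | (true, false) => [:: true; false]
  | (false, true) => [:: true; false; false]
  | (false, false) => [:: false; true]
  end.

Definition push_letter (st : nf_state) (l : letter) : nf_state :=
  foldl push_token (st.1 - 1, st.2) (letter_tokens l).

Definition syllable_letters (y : syllable) : seq letter :=
  match y.2 with
  | Posz n => nseq n (y.1, true)
  | Negz n => nseq n.+1 (y.1, false)
  end.

Definition braid_nf (w : word) : nf_state :=
  foldl push_letter (0, [::]) (flatten (map syllable_letters w)).

Section BraidWords.
Variables (R : comUnitRingType) (A : unitAlgType R) (s t : A).

Definition eval_syllable (y : syllable) : A := (if y.1 then s else t) ^ y.2.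
Definition eval_word (w : word) : A := foldl (fun x y => x * eval_syllable y) 1 w.

Lemma foldl_mul_1 (T : Type) (f : T -> A) (l : seq T) (x : A) :
  foldl (fun x y => x * f y) x l = x * foldl (fun x y => x * f y) 1 l.
Proof.
elim: l x => [|y l IHl] x /=; first by rewrite mulr1.
by rewrite IHl [in RHS]IHl mul1r mulrA.
Qed.

Lemma eval_word1 y : eval_word [:: y] = eval_syllable y.
Proof. by rewrite /eval_word /= mul1r. Qed.

Lemma eval_word_cat w1 w2 : eval_word (w1 ++ w2) = eval_word w1 * eval_word w2.
Proof. by rewrite /eval_word foldl_cat foldl_mul_1. Qed.

Lemma eval_shift i w j : eval_word (shift i w j) = s ^ i * eval_word w * s ^ j.
Proof. by rewrite /shift -cat1s !eval_word_cat !eval_word1 mulrA. Qed.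

Lemma eval_word_split w pos : (pos < size w)%N ->
  eval_word w =
  eval_word (take pos w) * eval_syllable (nth (true, 0%Z) w pos) * eval_word (drop pos.+1 w).
Proof.
move=> lt_pos; rewrite -{1}(cat_take_drop pos w) (drop_nth (true, 0%Z) lt_pos).
by rewrite -cat1s !eval_word_cat eval_word1 mulrA.
Qed.

Lemma eval_set_exponent w pos k : (pos < size w)%N ->
  eval_word (set_exponent w pos k) = eval_word (take pos w) *
    eval_syllable ((nth (true, 0%Z) w pos).1, k) * eval_word (drop pos.+1 w).
Proof.
by move=> lt_pos; rewrite /set_exponent set_nthE lt_pos -cat1s !eval_word_cat eval_word1 mulrA.
Qed.

Hypotheses (s_unit : s \is a GRing.unit) (t_unit : t \is a GRing.unit).
Hypothesis braid : s * t * s = t * s * t.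

Lemma braidL p : p * s * t * s = p * t * s * t.
Proof. by have := congr1 (fun u => p * u) braid; rewrite !mulrA. Qed.

Definition delta := s * t * s.
Definition rho := s * t.
Definition delta2 := delta * delta.

Definition eval_token (tk : bool) := if tk then delta else rho.

Fixpoint eval_tokens (l : seq bool) : A :=
  if l is tk :: l' then eval_tokens l' * eval_token tk else 1.

Definition eval_state (st : nf_state) := delta2 ^ st.1 * eval_tokens st.2.

Lemma delta2_unit : delta2 \is a GRing.unit.
Proof. by rewrite /delta2 /delta !unitrMl. Qed.

Lemma rho3 : rho * rho * rho = delta2.
Proof. by rewrite /rho /delta2 /delta !mulrA [RHS]braidL. Qed.

Lemma delta2_comm_tokens l : GRing.comm delta2 (eval_tokens l).
Proof.
elim: l => [|tk l IHl] /=; first exact: commr1.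
apply: commrM => //; rewrite /GRing.comm; case: tk => /=; first by rewrite /delta2 mulrA.
by rewrite -rho3 !mulrA.
Qed.

Lemma delta2_shift n l : delta2 ^ (n + 1) * eval_tokens l = delta2 ^ n * eval_tokens l * delta2.
Proof.
by rewrite exprzDr ?delta2_unit // expr1z -mulrA (delta2_comm_tokens l) mulrA.
Qed.

Lemma push_token_eval st tk :
  eval_state (push_token st tk) = eval_state st * eval_token tk.
Proof.
rewrite /eval_state; case: st => n l; case: tk => /=.
  case: l => [|[] l] /=; rewrite ?mulrA //.
  by rewrite delta2_shift /delta2 !mulrA.
case: l => [|[] [|[] l]] /=; rewrite ?mulrA //.
by rewrite delta2_shift -rho3 /rho !mulrA.
Qed.

Lemma push_tokens_eval st l :
  eval_state (foldl push_token st l) = eval_state st * foldl (fun x tk => x * eval_token tk) 1 l.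
Proof.
elim: l st => [|tk l IHl] st /=; first by rewrite mulr1.
by rewrite IHl push_token_eval mul1r [in RHS]foldl_mul_1 mulrA.
Qed.

Definition eval_letter (l : letter) : A := (if l.1 then s else t) ^ (if l.2 then 1 else -1).

Lemma delta2_s : delta2 * s = rho * rho * delta.
Proof. by rewrite /delta2 /rho /delta !mulrA braidL. Qed.

Lemma delta2_t : delta2 * t = delta * rho * rho.
Proof. by rewrite /delta2 /rho /delta !mulrA. Qed.

Lemma delta2_sV : delta2 * s^-1 = delta * rho.
Proof. by rewrite -[delta * rho](mulrK s_unit) /delta2 /rho /delta !mulrA. Qed.

Lemma delta2_tV : delta2 * t^-1 = rho * delta.
Proof. by rewrite -[rho * delta](mulrK t_unit) /delta2 /rho /delta !mulrA braidL. Qed.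

Lemma letter_tokens_eval l :
  delta2 * eval_letter l = foldl (fun x tk => x * eval_token tk) 1 (letter_tokens l).
Proof.
rewrite /eval_letter; case: l => [[] []] /=; rewrite !mul1r ?expr1z ?exprN1.
- exact: delta2_s.
- exact: delta2_sV.
- exact: delta2_t.
- exact: delta2_tV.
Qed.

Lemma push_letter_eval st l : eval_state (push_letter st l) = eval_state st * eval_letter l.
Proof.
rewrite /push_letter push_tokens_eval -letter_tokens_eval /eval_state /=.
by rewrite mulrA -delta2_shift subrK.
Qed.

Lemma push_letters_eval st ls :
  eval_state (foldl push_letter st ls) = eval_state st * foldl (fun x l => x * eval_letter l) 1 ls.
Proof.
elim: ls st => [|l ls IHls] st /=; first by rewrite mulr1.
by rewrite IHls push_letter_eval mul1r [in RHS]foldl_mul_1 mulrA.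
Qed.

Lemma eval_syllable_letters y :
  eval_syllable y = foldl (fun x l => x * eval_letter l) 1 (syllable_letters y).
Proof.
have foldl_nseq n l : foldl (fun x l => x * eval_letter l) 1 (nseq n l) = eval_letter l ^+ n.
  by elim: n => [|n IHn] //=; rewrite mul1r foldl_mul_1 IHn exprS.
case: y => g [n|n]; rewrite /eval_syllable /syllable_letters foldl_nseq /eval_letter /=.
  by rewrite expr1z.
by rewrite exprN1 exprVn.
Qed.

Lemma eval_word_nf w : eval_word w = eval_state (braid_nf w).
Proof.
rewrite /braid_nf push_letters_eval /eval_state /= expr0z !mul1r /eval_word.
elim: w => [|y w IHw] //=.
by rewrite foldl_cat mul1r foldl_mul_1 IHw eval_syllable_letters -foldl_mul_1.
Qed.

Lemma braid_nf_sound w1 w2 : braid_nf w1 = braid_nf w2 -> eval_word w1 = eval_word w2.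
Proof. by rewrite !eval_word_nf => ->. Qed.

End BraidWords.

Lemma int_ind_from (P : int -> Prop) (m : int) :
  P m -> (forall k, P k -> P (k + 1)) -> (forall k, P (k + 1) -> P k) -> forall l, P l.
Proof.
move=> Pm up down l; rewrite -(subrK m l).
elim/int_ind: (l - m) => [|n IHn|n IHn]; first by rewrite add0r.
  have -> : n.+1%:Z + m = n%:Z + m + 1 by lia.
  by apply: up.
apply: down; have -> : - n.+1%:Z + m + 1 = - n%:Z + m by lia.
exact: IHn.
Qed.

Section QuinticWindow.
Variables (R : comUnitRingType) (A : unitAlgType R) (a b c d e : R) (g : A).
Hypotheses (g_unit : g \is a GRing.unit) (e_unit : e \is a GRing.unit).
Hypothesis quintic : g ^+ 5 = a *: g ^+ 4 + b *: g ^+ 3 + c *: g ^+ 2 + d *: g + e%:A.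

Lemma quintic_shift k : g ^ (k + 5%:Z) =
  a *: g ^ (k + 4%:Z) + b *: g ^ (k + 3%:Z) + c *: g ^ (k + 2%:Z) + d *: g ^ (k + 1) + e *: g ^ k.
Proof.
rewrite !exprzDr // !expr1z -!exprnP quintic.
by rewrite !mulrDr -!scalerAr mulr1.
Qed.

Lemma quintic_shiftV k : g ^ k = e^-1 *: (g ^ (k + 5%:Z) -
  (a *: g ^ (k + 4%:Z) + b *: g ^ (k + 3%:Z) + c *: g ^ (k + 2%:Z) + d *: g ^ (k + 1))).
Proof. by rewrite quintic_shift addrC addKr scalerA mulVr ?scale1r. Qed.

Lemma window S m : submod S ->
  (forall r : nat, (r < 5)%N -> S (g ^ (m + r%:Z))) -> forall l, S (g ^ l).
Proof.
move=> HS Sm; pose P k := forall r : nat, (r < 5)%N -> S (g ^ (k + r%:Z)).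
suff PP k : P k by move=> l; have := PP l 0%N isT; rewrite addr0.
apply: (@int_ind_from P m) => // {}k Pk.
- have Pk0 : S (g ^ k) by have := Pk 0%N isT; rewrite addr0.
  move=> r; rewrite ltnS leq_eqVlt => /orP[/eqP->|lt_r4].
    have -> : k + 1 + 4%:Z = k + 5%:Z by lia.
    rewrite quintic_shift.
    by repeat apply: (submodD HS); apply: (submodZ _ HS); [apply: Pk..|exact: Pk0].
  have -> : k + 1 + r%:Z = k + r.+1%:Z by lia.
  exact: Pk.
- have Pk1 j : (j < 5)%N -> S (g ^ (k + j.+1%:Z)).
    by move=> lt_j5; rewrite (_ : k + j.+1%:Z = k + 1 + j%:Z); [apply: Pk|lia].
  move=> [_|r lt_r5]; last exact: Pk1 (ltnW lt_r5).
  rewrite addr0 quintic_shiftV; apply: (submodZ _ HS); apply: (submodB HS).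
    exact: Pk1 4%N isT.
  by repeat apply: (submodD HS); apply: (submodZ _ HS); apply: Pk1.
Qed.

Lemma window_mul S p q m : submod S ->
  (forall r : nat, (r < 5)%N -> S (p * g ^ (m + r%:Z) * q)) -> forall l, S (p * g ^ l * q).
Proof. by move=> HS; apply: (@window (fun u => S (p * u * q))); apply: submod_mulLR. Qed.

Lemma usub_pow l : usub g (g ^ l).
Proof.
apply: (@window _ 0) => [|r _]; first exact: submod_rspan.
by rewrite add0r; apply: mem_rspan; exists r.
Qed.

End QuinticWindow.

Section QuinticInverse.
Variables (R : comUnitRingType) (A : unitAlgType R) (a b c d e : R) (g : A).
Hypotheses (g_unit : g \is a GRing.unit) (e_unit : e \is a GRing.unit).
Hypothesis quintic : g ^+ 5 = a *: g ^+ 4 + b *: g ^+ 3 + c *: g ^+ 2 + d *: g + e%:A.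

Lemma quintic_inv : g^-1 ^+ 5 = (- (e^-1 * d)) *: g^-1 ^+ 4 + (- (e^-1 * c)) *: g^-1 ^+ 3
  + (- (e^-1 * b)) *: g^-1 ^+ 2 + (- (e^-1 * a)) *: g^-1 + e^-1%:A.
Proof.
have reverse (V : zmodType) (x y1 y2 y3 y4 : V) :
    x - (y1 + y2 + y3 + y4) = - y4 + - y3 + - y2 + - y1 + x.
  rewrite addrC -!opprD; congr (- _ + _).
  by rewrite [y1 + _ + _ + _]addrC [y1 + _ + _]addrC [y1 + _]addrC !addrA.
rewrite !exprVn !exprnN (quintic_shiftV g_unit e_unit quintic (- 5%:Z)).
have -> : - 5%:Z + 5%:Z = 0 by [].
have -> : - 5%:Z + 4%:Z = - 1 by [].
have -> : - 5%:Z + 3%:Z = - 2%:Z by [].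
have -> : - 5%:Z + 2%:Z = - 3%:Z by [].
have -> : - 5%:Z + 1 = - 4%:Z by [].
by rewrite expr0z exprN1 scalerBr !scalerDr !scalerA !scaleNr reverse.
Qed.

Lemma usub_inv_sub : msub (usub g^-1) (usub g).
Proof.
apply: usub_min => [|k]; first exact: submod_rspan.
by rewrite exprVn exprnN; apply: (usub_pow g_unit e_unit quintic).
Qed.

Lemma usub_sub_inv : msub (usub g) (usub g^-1).
Proof.
apply: usub_min => [|k]; first exact: submod_rspan.
have gV_unit : g^-1 \is a GRing.unit by rewrite unitrV.
have eV_unit : e^-1 \is a GRing.unit by rewrite unitrV.
have := usub_pow gV_unit eV_unit quintic_inv (- k%:Z).
by rewrite -exprnN -exprVn invrK.
Qed.

End QuinticInverse.

(* A certificate justifies words one after the other; a fact [(w, true)] means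
   that u1 w u1 lies in the submodule, [(w, false)] only that w does.
   [Gen], [Extra]: w is in the given family of two-sided, resp. one-sided, words.
   [Same (Ref n i j)]: w = s1^i f s1^j in B_3 for the [n]-th fact f, where
   i = j = 0 unless f is two-sided.  [Window pos m refs]: the words obtained by
   giving the syllable at [pos] the exponents m, ..., m + 4 are justified by
   [refs], and the quintic relation covers all other exponents. *)
Definition fact := (word * bool)%type.
Inductive ref := Ref of nat & int & int.
Arguments Ref _%_nat _%_int_scope _%_int_scope.

Inductive step :=
  | Gen
  | Extra
  | Same of ref
  | Window of nat & int & seq ref.
Arguments Window _%_nat _%_int_scope _.

Definition ref_flag (facts : seq fact) (v : word) (rf : ref) : option bool :=
  let: Ref n i j := rf in
  let: (f, two) := nth ([::], false) facts n in
  if (n < size facts)%N && (braid_nf v == braid_nf (shift i f j)) then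
    if two then Some true else if (i == 0) && (j == 0) then Some false else None
  else None.

Definition meet_flags (os : seq (option bool)) : option bool :=
  foldr (fun o acc => if (o, acc) is (Some b, Some c) then Some (b && c) else None)
    (Some true) os.

Definition window_flags (facts : seq fact) (w : word) (pos : nat) (m : int) (refs : seq ref) :=
  [seq ref_flag facts (set_exponent w pos (m + r%:Z)) (nth (Ref 0 0 0) refs r) | r <- iota 0 5].

Definition step_flag (gen extra : pred word) (facts : seq fact) (w : word) (st : step) :=
  match st with
  | Gen => if gen w then Some true else None
  | Extra => if extra w then Some false else None
  | Same rf => ref_flag facts w rf
  | Window pos m refs =>
    if (pos < size w)%N then
      meet_flags (window_flags facts w pos m refs)
    else None
  end.

Fixpoint run (gen extra : pred word) (facts : seq fact) (cert : seq (word * step)) : seq fact :=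
  if cert is (w, st) :: cert' then
    run gen extra
      (if step_flag gen extra facts w st is Some two then rcons facts (w, two) else facts) cert'
  else facts.

Lemma meet_flagsP os b :
  meet_flags os = Some b -> forall o, o \in os -> exists2 c, o = Some c & b ==> c.
Proof.
elim: os b => [//|o os IHos] b /=.
case: o => [c|] //; case E: (meet_flags os) => [c'|] // [<-] o.
rewrite inE => /orP[/eqP->|/(IHos _ E)[c'' -> le_c']].
  by exists c => //; apply/implyP => /andP[].
by exists c'' => //; apply/implyP => /andP[_ /(implyP le_c')].
Qed.

Notation g1 k := (true, k%Z).
Notation g2 k := (false, k%Z).

Definition window5 : seq int := [:: -2; -1; 0; 1; 2]%Z.

Lemma mem_window5 r : (r < 5)%N -> (-2)%Z + r%:Z \in window5.
Proof. by case: r => [|[|[|[|[|]]]]]. Qed.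

Definition omega_word : word := [:: g2 1; g1 2; g2 1].
Definition omegaV_word : word := [:: g2 (-1); g1 (-2); g2 (-1)].
Definition omegaV2_word : word := [:: g2 (-1); g1 (-2); g2 (-2); g1 (-2); g2 (-1)].

Definition U'_words : seq word := [::
  omega_word; omegaV_word;
  [:: g2 (-1); g1 2; g2 (-1)]; [:: g2 1; g1 (-2); g2 1];
  [:: g2 2; g1 2; g2 2]; [:: g2 (-2); g1 (-2); g2 (-2)];
  [:: g2 1; g1 (-2); g2 2]; [:: g2 (-1); g1 2; g2 (-2)];
  [:: g2 (-1); g1 1; g2 (-1)]; [:: g2 1; g1 (-1); g2 1];
  [:: g2 (-2); g1 (-2); g2 2]; [:: g2 2; g1 2; g2 (-2)];
  [:: g2 2; g1 (-2); g2 2]; [:: g2 (-2); g1 2; g2 (-2)];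
  [:: g2 (-2); g1 1; g2 (-1)]; [:: g2 (-1); g1 1; g2 (-2)]].

Definition gen_U (w : word) : bool :=
  (w \in U'_words) || (if w is [:: (false, _)] then true else false).

Definition gen_T (w : word) : bool :=
  (if w is [:: (false, _); (true, _); (false, _)] then true else false)
  || (w == omegaV2_word).

Definition x_word : word := [:: g2 (-2); g1 2; g2 (-1); g1 1; g2 (-1)].

Definition cert_U : seq (word * step) := [::
  ([:: g2 (-2); g1 (-2); g2 (-2)], Gen);
  ([:: g2 (-1); g1 (-2); g2 (-1)], Gen);
  ([:: g2 (-1)], Gen);
  ([:: g2 (-2)], Gen);
  ([:: g2 (-1); g1 1; g2 (-1)], Gen);
  ([:: g2 (-1); g1 2; g2 (-1)], Gen);
  ([:: g2 (-3); g1 (-1); g2 (-2)], Window 0 (-2) [:: Ref 1 (-8) 7; Ref 2 (-2) (-1); Ref 3 (-1) 0; Ref 4 (-1) 0; Ref 5 (-1) 0]);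
  ([:: g2 (-2); g1 (-2); g2 (-1)], Same (Ref 6 0 1));
  ([:: g2 (-2); g1 (-2); g2 0], Same (Ref 3 0 (-2)));
  ([:: g2 (-1); g1 1; g2 (-2)], Gen);
  ([:: g2 (-2); g1 (-2); g2 1], Same (Ref 9 0 (-1)));
  ([:: g2 (-2); g1 (-2); g2 2], Gen);
  ([:: g2 (-2); g1 (-1); g2 (-2)], Same (Ref 1 (-8) 7));
  ([:: g2 (-2); g1 (-1); g2 (-1)], Same (Ref 2 (-1) (-2)));
  ([:: g2 (-2); g1 (-1); g2 0], Same (Ref 3 0 (-1)));
  ([:: g2 (-2); g1 (-1); g2 1], Same (Ref 4 0 (-1)));
  ([:: g2 (-2); g1 (-1); g2 2], Same (Ref 5 0 (-1)));
  ([:: g2 (-4)], Gen);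
  ([:: g2 (-2); g1 0; g2 (-2)], Same (Ref 17 0 0));
  ([:: g2 (-3)], Gen);
  ([:: g2 (-2); g1 0; g2 (-1)], Same (Ref 19 0 0));
  ([:: g2 (-2); g1 0; g2 0], Same (Ref 3 0 0));
  ([:: g2 (-2); g1 0; g2 1], Same (Ref 2 0 0));
  ([:: g2 0], Gen);
  ([:: g2 (-2); g1 0; g2 2], Same (Ref 23 (-8) 8));
  ([:: g2 (-2); g1 1; g2 (-1)], Gen);
  ([:: g2 1], Gen);
  ([:: g2 1; g1 (-2); g2 1], Gen);
  ([:: g2 1; g1 (-2); g2 2], Gen);
  ([:: g2 (-3); g1 (-2); g2 1], Window 1 (-1) [:: Ref 25 0 (-1); Ref 3 0 0; Ref 26 1 (-3); Ref 27 1 (-1); Ref 28 1 (-1)]);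
  ([:: g2 (-2); g1 1; g2 (-2)], Same (Ref 29 0 1));
  ([:: g2 (-2); g1 1; g2 0], Same (Ref 3 0 1));
  ([:: g2 (-2); g1 1; g2 1], Same (Ref 26 1 (-2)));
  ([:: g2 (-2); g1 1; g2 2], Same (Ref 27 1 0));
  ([:: g2 (-2); g1 2; g2 (-2)], Gen);
  ([:: g2 (-1); g1 2; g2 (-2)], Gen);
  ([:: g2 (-2); g1 (-3); g2 (-1)], Window 0 (-1) [:: Ref 6 1 0; Ref 2 (-3) 0; Ref 19 (-1) 1; Ref 9 (-1) 1; Ref 35 (-1) 1]);
  ([:: g2 (-2); g1 2; g2 (-1)], Window 1 (-3) [:: Ref 36 0 0; Ref 6 0 1; Ref 2 (-1) (-2); Ref 19 0 0; Ref 25 0 0]);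
  ([:: g2 (-2); g1 2; g2 0], Same (Ref 3 0 2));
  ([:: g2 1; g1 (-1); g2 1], Gen);
  ([:: g2 (-2); g1 2; g2 1], Same (Ref 39 1 (-1)));
  ([:: g2 2; g1 2; g2 (-2)], Gen);
  ([:: g2 (-2); g1 2; g2 2], Same (Ref 41 1 (-1)));
  ([:: g2 (-1); g1 (-2); g2 (-2)], Same (Ref 6 2 (-1)));
  ([:: g2 (-1); g1 (-2); g2 0], Same (Ref 2 0 (-2)));
  ([:: g2 (-1); g1 (-2); g2 1], Same (Ref 3 1 (-1)));
  ([:: g2 (-1); g1 (-2); g2 2], Same (Ref 4 1 (-1)));
  ([:: g2 (-1); g1 (-1); g2 (-2)], Same (Ref 2 (-2) (-1)));
  ([:: g2 (-1); g1 (-1); g2 (-1)], Same (Ref 2 (-1) (-1)));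
  ([:: g2 (-1); g1 (-1); g2 0], Same (Ref 2 0 (-1)));
  ([:: g2 (-1); g1 (-1); g2 1], Same (Ref 2 1 (-1)));
  ([:: g2 (-1); g1 (-1); g2 2], Same (Ref 2 2 (-1)));
  ([:: g2 (-1); g1 0; g2 (-2)], Same (Ref 19 0 0));
  ([:: g2 (-1); g1 0; g2 (-1)], Same (Ref 3 0 0));
  ([:: g2 (-1); g1 0; g2 0], Same (Ref 2 0 0));
  ([:: g2 (-1); g1 0; g2 1], Same (Ref 23 (-8) 8));
  ([:: g2 (-1); g1 0; g2 2], Same (Ref 26 0 0));
  ([:: g2 (-1); g1 1; g2 0], Same (Ref 2 0 1));
  ([:: g2 (-1); g1 1; g2 1], Same (Ref 26 1 (-1)));
  ([:: g2 (-1); g1 1; g2 2], Same (Ref 39 1 0));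
  ([:: g2 (-1); g1 2; g2 0], Same (Ref 2 0 2));
  ([:: g2 2], Gen);
  ([:: g2 (-1); g1 2; g2 1], Same (Ref 61 1 (-1)));
  ([:: g2 (-5); g1 1; g2 (-1)], Window 0 (-2) [:: Ref 25 0 0; Ref 4 0 0; Ref 2 1 0; Ref 26 (-1) 1; Ref 39 0 1]);
  ([:: g2 (-5); g1 (-1); g2 1], Window 0 (-3) [:: Ref 25 0 (-1); Ref 4 0 (-1); Ref 2 1 (-1); Ref 26 (-1) 0; Ref 39 0 0]);
  ([:: g2 (-4); g1 (-1); g2 1], Window 0 (-3) [:: Ref 25 0 (-1); Ref 4 0 (-1); Ref 2 1 (-1); Ref 26 (-1) 0; Ref 39 0 0]);
  ([:: g2 (-1); g1 2; g2 2], Window 1 (-6) [:: Ref 63 1 (-1); Ref 64 1 0; Ref 65 1 0; Ref 25 1 (-1); Ref 4 1 (-1)]);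
  ([:: g2 0; g1 (-2); g2 (-2)], Same (Ref 3 (-2) 0));
  ([:: g2 0; g1 (-2); g2 (-1)], Same (Ref 2 (-2) 0));
  ([:: g2 0; g1 (-2); g2 0], Same (Ref 23 (-8) 6));
  ([:: g2 0; g1 (-2); g2 1], Same (Ref 26 (-2) 0));
  ([:: g2 0; g1 (-2); g2 2], Same (Ref 61 (-2) 0));
  ([:: g2 0; g1 (-1); g2 (-2)], Same (Ref 3 (-1) 0));
  ([:: g2 0; g1 (-1); g2 (-1)], Same (Ref 2 (-1) 0));
  ([:: g2 0; g1 (-1); g2 0], Same (Ref 23 (-8) 7));
  ([:: g2 0; g1 (-1); g2 1], Same (Ref 26 (-1) 0));
  ([:: g2 0; g1 (-1); g2 2], Same (Ref 61 (-1) 0));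
  ([:: g2 0; g1 0; g2 (-2)], Same (Ref 3 0 0));
  ([:: g2 0; g1 0; g2 (-1)], Same (Ref 2 0 0));
  ([:: g2 0; g1 0; g2 0], Same (Ref 23 (-8) 8));
  ([:: g2 0; g1 0; g2 1], Same (Ref 26 0 0));
  ([:: g2 0; g1 0; g2 2], Same (Ref 61 0 0));
  ([:: g2 0; g1 1; g2 (-2)], Same (Ref 3 1 0));
  ([:: g2 0; g1 1; g2 (-1)], Same (Ref 2 1 0));
  ([:: g2 0; g1 1; g2 0], Same (Ref 23 (-7) 8));
  ([:: g2 0; g1 1; g2 1], Same (Ref 26 1 0));
  ([:: g2 0; g1 1; g2 2], Same (Ref 61 1 0));
  ([:: g2 0; g1 2; g2 (-2)], Same (Ref 3 2 0));
  ([:: g2 0; g1 2; g2 (-1)], Same (Ref 2 2 0));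
  ([:: g2 0; g1 2; g2 0], Same (Ref 23 (-6) 8));
  ([:: g2 0; g1 2; g2 1], Same (Ref 26 2 0));
  ([:: g2 0; g1 2; g2 2], Same (Ref 61 2 0));
  ([:: g2 1; g1 (-2); g2 (-2)], Same (Ref 25 (-1) 0));
  ([:: g2 1; g1 (-2); g2 (-1)], Same (Ref 3 (-1) 1));
  ([:: g2 1; g1 (-2); g2 0], Same (Ref 26 0 (-2)));
  ([:: g2 1; g1 (-1); g2 (-2)], Same (Ref 4 (-1) 0));
  ([:: g2 1; g1 (-1); g2 (-1)], Same (Ref 2 (-1) 1));
  ([:: g2 1; g1 (-1); g2 0], Same (Ref 26 0 (-1)));
  ([:: g2 (-2); g1 (-5); g2 1], Window 1 (-2) [:: Ref 9 0 (-1); Ref 4 0 (-1); Ref 2 0 0; Ref 26 1 (-2); Ref 39 1 (-1)]);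
  ([:: g2 (-2); g1 (-4); g2 1], Window 1 (-2) [:: Ref 9 0 (-1); Ref 4 0 (-1); Ref 2 0 0; Ref 26 1 (-2); Ref 39 1 (-1)]);
  ([:: g2 (-2); g1 (-3); g2 1], Window 1 (-2) [:: Ref 9 0 (-1); Ref 4 0 (-1); Ref 2 0 0; Ref 26 1 (-2); Ref 39 1 (-1)]);
  ([:: g2 (-2); g1 3; g2 1], Window 1 (-5) [:: Ref 98 0 0; Ref 99 0 0; Ref 100 0 0; Ref 9 0 (-1); Ref 4 0 (-1)]);
  ([:: g2 1; g1 (-1); g2 2], Same (Ref 101 (-1) 1));
  ([:: g2 1; g1 0; g2 (-2)], Same (Ref 2 0 0));
  ([:: g2 1; g1 0; g2 (-1)], Same (Ref 23 (-8) 8));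
  ([:: g2 1; g1 0; g2 0], Same (Ref 26 0 0));
  ([:: g2 1; g1 0; g2 1], Same (Ref 61 0 0));
  ([:: g2 3], Gen);
  ([:: g2 1; g1 0; g2 2], Same (Ref 107 0 0));
  ([:: g2 1; g1 1; g2 (-2)], Same (Ref 26 (-2) 1));
  ([:: g2 1; g1 1; g2 (-1)], Same (Ref 26 (-1) 1));
  ([:: g2 1; g1 1; g2 0], Same (Ref 26 0 1));
  ([:: g2 1; g1 1; g2 1], Same (Ref 26 1 1));
  ([:: g2 1; g1 1; g2 2], Same (Ref 26 2 1));
  ([:: g2 1; g1 2; g2 (-2)], Same (Ref 39 (-1) 1));
  ([:: g2 1; g1 2; g2 (-1)], Same (Ref 61 (-1) 1));
  ([:: g2 1; g1 2; g2 0], Same (Ref 26 0 2));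
  ([:: g2 1; g1 2; g2 1], Gen);
  ([:: g2 (-3); g1 1; g2 (-2)], Window 0 (-2) [:: Ref 29 0 1; Ref 9 0 0; Ref 3 1 0; Ref 26 (-2) 1; Ref 27 0 1]);
  ([:: g2 (-4); g1 2; g2 1], Window 0 (-3) [:: Ref 27 1 (-1); Ref 39 1 (-1); Ref 61 1 (-1); Ref 26 2 0; Ref 117 (-8) 8]);
  ([:: g2 (-3); g1 1; g2 3], Window 2 (-2) [:: Ref 118 0 0; Ref 65 0 1; Ref 19 0 1; Ref 26 1 (-3); Ref 119 0 1]);
  ([:: g2 1; g1 (-5); g2 2], Window 1 (-3) [:: Ref 120 (-1) 0; Ref 28 0 0; Ref 101 (-1) 1; Ref 107 0 0; Ref 26 2 1]);
  ([:: g2 1; g1 (-4); g2 2], Window 1 (-3) [:: Ref 120 (-1) 0; Ref 28 0 0; Ref 101 (-1) 1; Ref 107 0 0; Ref 26 2 1]);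
  ([:: g2 1; g1 2; g2 2], Window 1 (-5) [:: Ref 121 0 0; Ref 122 0 0; Ref 120 (-1) 0; Ref 28 0 0; Ref 101 (-1) 1]);
  ([:: g2 2; g1 (-2); g2 (-2)], Same (Ref 11 (-1) 1));
  ([:: g2 2; g1 (-2); g2 (-1)], Same (Ref 4 (-1) 1));
  ([:: g2 2; g1 (-2); g2 0], Same (Ref 61 0 (-2)));
  ([:: g2 1; g1 (-5); g2 (-3)], Window 1 (-3) [:: Ref 118 (-1) 0; Ref 29 (-1) 1; Ref 9 (-1) 0; Ref 3 0 0; Ref 26 (-3) 1]);
  ([:: g2 1; g1 (-4); g2 (-3)], Window 1 (-3) [:: Ref 118 (-1) 0; Ref 29 (-1) 1; Ref 9 (-1) 0; Ref 3 0 0; Ref 26 (-3) 1]);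
  ([:: g2 1; g1 3; g2 (-3)], Window 1 (-5) [:: Ref 127 0 0; Ref 128 0 0; Ref 118 (-1) 0; Ref 29 (-1) 1; Ref 9 (-1) 0]);
  ([:: g2 2; g1 (-2); g2 1], Same (Ref 129 1 (-1)));
  ([:: g2 2; g1 (-2); g2 2], Gen);
  ([:: g2 2; g1 (-1); g2 (-2)], Same (Ref 5 (-1) 0));
  ([:: g2 2; g1 (-1); g2 (-1)], Same (Ref 2 (-1) 2));
  ([:: g2 2; g1 (-1); g2 0], Same (Ref 61 0 (-1)));
  ([:: g2 2; g1 (-1); g2 1], Same (Ref 66 (-1) 0));
  ([:: g2 (-1); g1 (-5); g2 3], Window 1 (-3) [:: Ref 37 1 (-1); Ref 5 1 (-1); Ref 2 3 (-1); Ref 61 0 0; Ref 101 0 1]);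
  ([:: g2 (-1); g1 (-4); g2 3], Window 1 (-3) [:: Ref 37 1 (-1); Ref 5 1 (-1); Ref 2 3 (-1); Ref 61 0 0; Ref 101 0 1]);
  ([:: g2 (-1); g1 2; g2 3], Window 1 (-5) [:: Ref 136 0 0; Ref 137 0 0; Ref 37 1 (-1); Ref 5 1 (-1); Ref 2 3 (-1)]);
  ([:: g2 2; g1 (-1); g2 2], Same (Ref 138 (-1) 0));
  ([:: g2 2; g1 0; g2 (-2)], Same (Ref 23 (-8) 8));
  ([:: g2 2; g1 0; g2 (-1)], Same (Ref 26 0 0));
  ([:: g2 2; g1 0; g2 0], Same (Ref 61 0 0));
  ([:: g2 2; g1 0; g2 1], Same (Ref 107 0 0));
  ([:: g2 4], Gen);
  ([:: g2 2; g1 0; g2 2], Same (Ref 144 0 0));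
  ([:: g2 2; g1 1; g2 (-2)], Same (Ref 27 0 1));
  ([:: g2 2; g1 1; g2 (-1)], Same (Ref 39 0 1));
  ([:: g2 2; g1 1; g2 0], Same (Ref 61 0 1));
  ([:: g2 2; g1 1; g2 1], Same (Ref 26 1 2));
  ([:: g2 2; g1 1; g2 2], Same (Ref 117 (-7) 8));
  ([:: g2 2; g1 2; g2 (-1)], Same (Ref 101 (-1) 2));
  ([:: g2 2; g1 2; g2 0], Same (Ref 61 0 2));
  ([:: g2 2; g1 2; g2 1], Same (Ref 123 2 (-2)));
  ([:: g2 2; g1 2; g2 2], Gen)].

Definition cert_T : seq (word * step) := [::
  ([:: g2 (-1); g1 (-2); g2 (-2); g1 (-2); g2 (-1)], Gen);
  ([:: g2 (-3); g1 (-1); g2 (-2)], Gen);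
  ([:: g2 (-4); g1 (-1); g2 (-2)], Gen);
  ([:: g2 (-3); g1 (-1); g2 (-3)], Gen);
  ([:: g2 (-2); g1 (-2); g2 (-2)], Gen);
  ([:: g2 (-3); g1 (-2); g2 (-3); g1 (-1); g2 (-2)], Window 0 (-1) [:: Ref 0 (-8) 7; Ref 1 (-2) 0; Ref 2 (-1) 1; Ref 3 (-1) 2; Ref 4 (-1) 2]);
  ([:: g2 (-3); g1 (-1); g2 (-3); g1 (-2); g2 (-1)], Window 0 (-2) [:: Ref 0 (-8) 7; Ref 1 (-2) 0; Ref 2 (-1) 1; Ref 3 (-1) 2; Ref 4 (-1) 2]);
  ([:: g2 (-3); g1 (-1); g2 (-3); g1 (-1); g2 2], Window 4 (-5) [:: Ref 5 1 (-3); Ref 6 1 (-3); Ref 0 (-8) 5; Ref 1 (-1) (-3); Ref 2 0 (-2)]);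
  ([:: g2 (-2); g1 (-2); g2 (-1); g1 1; g2 (-1)], Same (Ref 7 0 1));
  ([:: g2 (-7); g1 (-1); g2 (-1)], Gen);
  ([:: g2 (-2); g1 (-1); g2 (-1); g1 1; g2 (-1)], Same (Ref 9 (-1) 6));
  ([:: g2 (-4); g1 (-1); g2 1], Gen);
  ([:: g2 (-2); g1 0; g2 (-1); g1 1; g2 (-1)], Same (Ref 11 0 1));
  ([:: g2 (-3); g1 (-2); g2 2], Gen);
  ([:: g2 (-2); g1 1; g2 (-1); g1 1; g2 (-1)], Same (Ref 13 0 1));
  ([:: g2 (-2); g1 2; g2 (-1); g1 1; g2 (-1)], Extra);
  ([:: g2 (-1); g1 (-2); g2 (-1); g1 1; g2 (-1)], Same (Ref 1 3 (-1)));
  ([:: g2 (-7); g1 0; g2 5], Gen);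
  ([:: g2 (-1); g1 (-1); g2 (-1); g1 1; g2 (-1)], Same (Ref 17 (-1) 0));
  ([:: g2 (-3); g1 (-1); g2 1], Gen);
  ([:: g2 (-1); g1 0; g2 (-1); g1 1; g2 (-1)], Same (Ref 19 0 1));
  ([:: g2 (-2); g1 (-2); g2 2], Gen);
  ([:: g2 (-1); g1 1; g2 (-1); g1 1; g2 (-1)], Same (Ref 21 0 1));
  ([:: g2 3; g1 (-2); g2 (-2)], Gen);
  ([:: g2 (-1); g1 2; g2 (-1); g1 1; g2 (-1)], Same (Ref 23 1 0));
  ([:: g2 (-2); g1 (-1); g2 1], Gen);
  ([:: g2 0; g1 (-2); g2 (-1); g1 1; g2 (-1)], Same (Ref 25 (-2) 1));
  ([:: g2 0; g1 (-1); g2 (-1); g1 1; g2 (-1)], Same (Ref 25 (-1) 1));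
  ([:: g2 0; g1 0; g2 (-1); g1 1; g2 (-1)], Same (Ref 25 0 1));
  ([:: g2 0; g1 1; g2 (-1); g1 1; g2 (-1)], Same (Ref 25 1 1));
  ([:: g2 0; g1 2; g2 (-1); g1 1; g2 (-1)], Same (Ref 25 2 1));
  ([:: g2 (-3); g1 (-1); g2 2], Gen);
  ([:: g2 1; g1 (-2); g2 (-1); g1 1; g2 (-1)], Same (Ref 31 (-1) 1));
  ([:: g2 (-2); g1 (-1); g2 2], Gen);
  ([:: g2 1; g1 (-1); g2 (-1); g1 1; g2 (-1)], Same (Ref 33 (-1) 1));
  ([:: g2 1; g1 0; g2 (-1); g1 1; g2 (-1)], Same (Ref 9 2 7));
  ([:: g2 (-5); g1 0; g2 7], Gen);
  ([:: g2 1; g1 1; g2 (-1); g1 1; g2 (-1)], Same (Ref 36 (-2) 1));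
  ([:: g2 (-2); g1 3; g2 1], Gen);
  ([:: g2 1; g1 2; g2 (-1); g1 1; g2 (-1)], Same (Ref 38 (-2) 2));
  ([:: g2 (-2); g1 (-2); g2 3], Gen);
  ([:: g2 2; g1 (-2); g2 (-1); g1 1; g2 (-1)], Same (Ref 40 (-1) 1));
  ([:: g2 (-2); g1 (-1); g2 3], Gen);
  ([:: g2 2; g1 (-1); g2 (-1); g1 1; g2 (-1)], Same (Ref 42 (-1) 1));
  ([:: g2 (-7); g1 1; g2 1], Gen);
  ([:: g2 2; g1 0; g2 (-1); g1 1; g2 (-1)], Same (Ref 44 (-2) 8));
  ([:: g2 (-3); g1 3; g2 1], Gen);
  ([:: g2 2; g1 1; g2 (-1); g1 1; g2 (-1)], Same (Ref 46 (-1) 2));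
  ([:: g2 (-2); g1 2; g2 3], Gen);
  ([:: g2 2; g1 2; g2 (-1); g1 1; g2 (-1)], Same (Ref 48 (-1) 1))].

Definition facts_U := run gen_U pred0 [::] cert_U.
Definition facts_T := run gen_T (pred1 x_word) [::] cert_T.

Lemma cert_U_ok :
  all (fun i => all (fun j => all (fun k => ([:: g2 i; g1 j; g2 k], true) \in facts_U)
    window5) window5) window5.
Proof. by vm_compute. Qed.

Lemma cert_T_ok :
  all (fun i => all (fun j => [:: g2 i; g1 j; g2 (-1); g1 1; g2 (-1)] \in unzip1 facts_T)
    window5) window5.
Proof. by vm_compute. Qed.

Ltac submod_auto :=
  rewrite /U'' /U' /u1xu1 /u1x /u12121 /u1 /u2 /usub /rline /mprod;
  repeat first [apply: submod_msum | apply: submod_rspan].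

Ltac in_msum leaf :=
  first [ leaf
        | apply: msumL; [submod_auto | in_msum leaf]
        | apply: msumR; [submod_auto | in_msum leaf] ].

Section H5.
Variables (R : comUnitRingType) (A : unitAlgType R) (a b c d e : R) (s t : A).
Hypothesis rels : H5_rels a b c d e s t.

Let e_unit : e \is a GRing.unit. Proof. by case: rels. Qed.
Let s_unit : s \is a GRing.unit. Proof. by case: rels => _ []. Qed.
Let t_unit : t \is a GRing.unit. Proof. by case: rels => _ []. Qed.
Let braid : s * t * s = t * s * t. Proof. by case: rels. Qed.
Let quintic_s : s ^+ 5 = a *: s ^+ 4 + b *: s ^+ 3 + c *: s ^+ 2 + d *: s + e%:A.
Proof. by case: rels. Qed.
Let quintic_t : t ^+ 5 = a *: t ^+ 4 + b *: t ^+ 3 + c *: t ^+ 2 + d *: t + e%:A.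
Proof. by case: rels. Qed.

Section Soundness.
Variable S : A -> Prop.
Hypothesis HS : submod S.

Definition sat (two : bool) (x : A) : Prop :=
  if two then forall i j : int, S (s ^ i * x * s ^ j) else S x.

Definition holds (f : fact) := sat f.2 (eval_word s t f.1).

Lemma submod_sat two : submod (sat two).
Proof.
case: two => //=; split=> [i j|x y Sx Sy i j|r x Sx i j].
- by rewrite mulr0 mul0r; apply: submod0.
- by rewrite mulrDr mulrDl; apply: submodD.
- by rewrite -scalerAr -scalerAl; apply: submodZ.
Qed.

Lemma sat_mono (two two' : bool) x : two ==> two' -> sat two' x -> sat two x.
Proof. by case: two; case: two' => //= _ /(_ 0 0); rewrite !expr0z mul1r mulr1. Qed.

Lemma sat_shift i j x : sat true x -> sat true (s ^ i * x * s ^ j).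
Proof.
move=> Sx i' j'; rewrite !mulrA -exprzDr // -!mulrA -exprzDr // !mulrA.
exact: Sx.
Qed.

Lemma ref_flag_sound facts v rf two :
  {in facts, forall f, holds f} -> ref_flag facts v rf = Some two -> holds (v, two).
Proof.
case: rf => n i j Hfacts; rewrite /ref_flag; case E: (nth _ facts n) => [f two'].
case: ifP => // /andP[lt_n /eqP/(braid_nf_sound s_unit t_unit braid) v_eq].
have : holds (f, two') by rewrite -E; apply/Hfacts/mem_nth.
rewrite /holds /= v_eq eval_shift; case: two' {E} => Hf; first by move=> [<-]; apply: sat_shift.
by case: ifP => // /andP[/eqP-> /eqP->] [<-]; rewrite expr0z mul1r mulr1.
Qed.

Lemma holds_window w pos m two : (pos < size w)%N ->
  (forall r : nat, (r < 5)%N -> holds (set_exponent w pos (m + r%:Z), two)) -> holds (w, two).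
Proof.
move=> lt_pos Hr; rewrite /holds /= (eval_word_split _ _ lt_pos) /eval_syllable.
have {}Hr r : (r < 5)%N -> sat two (eval_word s t (take pos w) *
    (if (nth (true, 0%Z) w pos).1 then s else t) ^ (m + r%:Z) * eval_word s t (drop pos.+1 w)).
  by move=> /Hr; rewrite /holds /= eval_set_exponent.
case: (nth _ w pos).1 Hr => Hr.
  exact: (window_mul s_unit e_unit quintic_s (submod_sat two) Hr).
exact: (window_mul t_unit e_unit quintic_t (submod_sat two) Hr).
Qed.

Lemma window_flag_sound facts w pos m refs two :
  {in facts, forall f, holds f} -> (pos < size w)%N ->
  meet_flags (window_flags facts w pos m refs) = Some two -> holds (w, two).
Proof.
move=> Hfacts lt_pos /meet_flagsP Hflags; apply: (holds_window (m := m) lt_pos) => r lt_r5.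
have /Hflags[two' /(ref_flag_sound Hfacts) Hr le_two] :
    ref_flag facts (set_exponent w pos (m + r%:Z)) (nth (Ref 0 0 0) refs r)
    \in window_flags facts w pos m refs by apply: map_f; rewrite mem_iota.
exact: sat_mono le_two Hr.
Qed.

Variables gen extra : pred word.
Hypothesis gen_sat : forall w, gen w -> sat true (eval_word s t w).
Hypothesis extra_sat : forall w, extra w -> sat false (eval_word s t w).

Lemma step_flag_sound facts w st two :
  {in facts, forall f, holds f} -> step_flag gen extra facts w st = Some two -> holds (w, two).
Proof.
move=> Hfacts; case: st => [||rf|pos m refs] /=.
- by case: ifP => // /gen_sat Hw [<-].
- by case: ifP => // /extra_sat Hw [<-].
- exact: ref_flag_sound.
- by case: ifP => // lt_pos; apply: window_flag_sound.
Qed.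

Lemma run_sound cert : {in run gen extra [::] cert, forall f, holds f}.
Proof.
have : {in [::], forall f, holds f} by [].
elim: cert [::] => [//|[w st] cert IHcert] facts Hfacts /=.
apply: IHcert; case E: (step_flag _ _ _ _ _) => [two|//] f.
rewrite mem_rcons inE => /orP[/eqP->|]; [exact: step_flag_sound E|exact: Hfacts].
Qed.

Lemma holds_unzip1 facts w :
  {in facts, forall f, holds f} -> w \in unzip1 facts -> holds (w, false).
Proof. by move=> Hfacts /mapP[[w' two] /Hfacts Hw ->]; apply: sat_mono Hw. Qed.

End Soundness.

Lemma u1_pow l : u1 s (s ^ l). Proof. exact: usub_pow s_unit e_unit quintic_s l. Qed.
Lemma u2_pow l : u2 t (t ^ l). Proof. exact: usub_pow t_unit e_unit quintic_t l. Qed.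

Lemma eval_omega : eval_word s t omega_word = omega s t.
Proof. by rewrite /eval_word /eval_syllable /= mul1r !expr1z. Qed.

Lemma omega_unit : omega s t \is a GRing.unit.
Proof. by rewrite !unitrMl ?unitrX. Qed.

Lemma omega_comm : GRing.comm (omega s t) s.
Proof.
have := braid_nf_sound s_unit t_unit braid
  (w1 := omega_word ++ [:: g1 1]) (w2 := [:: g1 1] ++ omega_word) erefl.
by rewrite !eval_word_cat eval_omega eval_word1 /eval_syllable /= expr1z.
Qed.

Lemma eval_omegaV : eval_word s t omegaV_word = (omega s t)^-1.
Proof.
have := braid_nf_sound s_unit t_unit braid
  (w1 := omegaV_word ++ omega_word) (w2 := [::]) erefl.
rewrite eval_word_cat eval_omega /= => V_omega.
by rewrite -[LHS]mulr1 -(mulrV omega_unit) mulrA V_omega mul1r.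
Qed.

Lemma omegaV_comm : GRing.comm (omega s t)^-1 s.
Proof. by apply/commr_sym/commrV/commr_sym/omega_comm. Qed.

Lemma u1x_comm_shift g i j : GRing.comm g s -> u1x s g (s ^ i * g * s ^ j).
Proof.
move=> gs; rewrite -mulrA (commrXz j gs) mulrA -exprzDr //.
by apply: mem_mprod; [apply: u1_pow|apply: mem_rline].
Qed.

Lemma submod_U' : submod (U' s t). Proof. by submod_auto. Qed.
Lemma submod_U'' : submod (U'' s t). Proof. by submod_auto. Qed.

Ltac mem_generator :=
  first [ apply: u1x_comm_shift; first [exact: omega_comm | exact: omegaV_comm]
        | apply: mem_mprod; last exact: u1_pow;
          apply: mem_mprod; [exact: u1_pow | first [exact: u2_pow | exact: mem_rline]] ].

Ltac U'_word :=
  rewrite ?eval_omega ?eval_omegaV /eval_word /eval_syllable /= ?mul1r => i j;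
  in_msum mem_generator.

Lemma U'_gen w : gen_U w -> sat (U' s t) true (eval_word s t w).
Proof.
case/orP=> [|]; last first.
  by case: w => [|[[] k] []] // _ i j; rewrite eval_word1; in_msum mem_generator.
rewrite !in_cons in_nil orbF.
by do 15 (case/orP=> [/eqP->|]; first by U'_word); move/eqP->; U'_word.
Qed.

Lemma U'_s2s1s2 k l m : sat (U' s t) true (t ^ k * s ^ l * t ^ m).
Proof.
have no_extra (w : word) : pred0 w -> sat (U' s t) false (eval_word s t w) by [].
have cert : {in facts_U, forall f, holds (U' s t) f} :=
  run_sound submod_U' U'_gen no_extra (cert := cert_U).
have -> : t ^ k * s ^ l * t ^ m = eval_word s t [:: g2 k; g1 l; g2 m].
  by rewrite /eval_word /= mul1r.
change (holds (U' s t) ([:: g2 k; g1 l; g2 m], true)).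
apply: (holds_window submod_U' (pos := 0) (m := (-2)%Z)) => // r1 /mem_window5 r1w.
rewrite /set_exponent /=.
apply: (holds_window submod_U' (pos := 1) (m := (-2)%Z)) => // r2 /mem_window5 r2w.
rewrite /set_exponent /=.
apply: (holds_window submod_U' (pos := 2) (m := (-2)%Z)) => // r3 /mem_window5 r3w.
rewrite /set_exponent /=.
apply: cert.
by move: cert_U_ok => /allP/(_ _ r1w)/allP/(_ _ r2w)/allP/(_ _ r3w).
Qed.

Lemma u12121_sub_U' : msub (u12121 s t) (U' s t).
Proof.
have HS := submod_U'.
apply: (mprod_usub_min (g := s)) => // m; have HS1 := submod_mulr (s ^+ m) HS.
apply: (mprod_usub_min (g := t)) => // l; have HS2 := submod_mulr (t ^+ l) HS1.
apply: (mprod_usub_min (g := s)) => // k; have HS3 := submod_mulr (s ^+ k) HS2.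
apply: (mprod_usub_min (g := t)) => // j; have HS4 := submod_mulr (t ^+ j) HS3.
apply: (usub_min (g := s)) => // i.
by have := U'_s2s1s2 j k l i m; rewrite -!exprnP !mulrA.
Qed.

Definition target_i := msum (u1x s ((omega s t) ^- 2))
  (msum (rline (t ^- 2 * s ^+ 2 * t ^-1 * s * t ^-1)) (u12121 s t)).

Lemma submod_target_i : submod target_i. Proof. by rewrite /target_i; submod_auto. Qed.

Lemma eval_omegaV2 : eval_word s t omegaV2_word = (omega s t) ^- 2.
Proof.
have := braid_nf_sound s_unit t_unit braid
  (w1 := omegaV2_word ++ omega_word ++ omega_word) (w2 := [::]) erefl.
rewrite !eval_word_cat eval_omega -expr2 /= => V2_omega2.
by rewrite -[LHS]mulr1 -(mulrV (unitrX 2 omega_unit)) mulrA V2_omega2 mul1r.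
Qed.

Lemma target_i_gen w : gen_T w -> sat target_i true (eval_word s t w).
Proof.
case/orP=> [|/eqP->]; last first.
  rewrite eval_omegaV2 => i j; apply: msumL; first by submod_auto.
  by apply: u1x_comm_shift; apply/commr_sym/commrV/commrX/commr_sym/omega_comm.
case: w => [|[[] k1] [|[[] k2] [|[[] k3] []]]] // _ i j.
rewrite /eval_word /= mul1r !mulrA; apply: msumR; first by submod_auto.
apply: msumR; first by submod_auto.
by rewrite /u12121; repeat first [exact: u1_pow | exact: u2_pow | apply: mem_mprod].
Qed.

Lemma target_i_extra w : pred1 x_word w -> sat target_i false (eval_word s t w).
Proof.
move/eqP->; apply: msumR; first by submod_auto.
by apply: msumL; [submod_auto|rewrite /eval_word /= mul1r; apply: mem_rline].
Qed.

Lemma target_i_monomial m n : target_i (t ^ m * s ^ n * (t ^-1 * s * t ^-1)).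
Proof.
have cert : {in facts_T, forall f, holds target_i f} :=
  run_sound submod_target_i target_i_gen target_i_extra (cert := cert_T).
have -> : t ^ m * s ^ n * (t ^-1 * s * t ^-1)
    = eval_word s t [:: g2 m; g1 n; g2 (-1); g1 1; g2 (-1)].
  by rewrite /eval_word /eval_syllable /= mul1r !mulrA.
change (holds target_i ([:: g2 m; g1 n; g2 (-1); g1 1; g2 (-1)], false)).
apply: (holds_window submod_target_i (pos := 0) (m := (-2)%Z)) => // r1 /mem_window5 r1w.
rewrite /set_exponent /=.
apply: (holds_window submod_target_i (pos := 1) (m := (-2)%Z)) => // r2 /mem_window5 r2w.
rewrite /set_exponent /=.
apply: (holds_unzip1 cert).
by move: cert_T_ok => /allP/(_ _ r1w)/allP/(_ _ r2w).
Qed.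

Lemma part_i : msub (mprod (mprod (u2 t) (u1 s)) (rline (t ^-1 * s * t ^-1))) target_i.
Proof.
have HS := submod_target_i.
apply: mprod_rline_min => //; apply: mprod_usub_min => [|n]; first exact: submod_mulr _ HS.
apply: usub_min => [|m]; first exact: submod_mulr _ (submod_mulr _ HS).
by rewrite !exprnP; apply: target_i_monomial.
Qed.

Lemma u1xu1_self g : u1xu1 s g g.
Proof.
have := mem_mprod (mem_mprod (u1_pow 0) (mem_rline g)) (u1_pow 0).
by rewrite expr0z mul1r mulr1.
Qed.

Lemma target_sub_U'' g x : msub (u1x s g) (U'' s t) -> msub (u1xu1 s x) (U'' s t) ->
  msub (msum (u1x s g) (msum (rline x) (u12121 s t))) (U'' s t).
Proof.
have HS := submod_U''.
move=> gU xU; apply: msum_min => //; apply: msum_min => // [|z /u12121_sub_U' Hz].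
  by apply: rspan_min => // _ ->; apply/xU/u1xu1_self.
by apply: msumL => //; submod_auto.
Qed.

Lemma target_i_sub_U'' : msub target_i (U'' s t).
Proof. by apply: target_sub_U'' => z Hz; in_msum ltac:(exact: Hz). Qed.

Definition target_ii := msum (u1x s ((omega s t) ^+ 2))
  (msum (rline (t ^+ 2 * s ^- 2 * t * s ^-1 * t)) (u12121 s t)).

Lemma target_ii_sub_U'' : msub target_ii (U'' s t).
Proof. by apply: target_sub_U'' => z Hz; in_msum ltac:(exact: Hz). Qed.

End H5.

Lemma H5_rels_inv (R : comUnitRingType) (A : unitAlgType R) (a b c d e : R) (s t : A) :
  H5_rels a b c d e s t ->
  H5_rels (- (e^-1 * d)) (- (e^-1 * c)) (- (e^-1 * b)) (- (e^-1 * a)) e^-1 s^-1 t^-1.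
Proof.
case=> e_unit [s_unit t_unit] braid quintic_s quintic_t.
have invM3 (x y z : A) : x \is a GRing.unit -> y \is a GRing.unit -> z \is a GRing.unit ->
    (x * y * z)^-1 = z^-1 * y^-1 * x^-1.
  by move=> xu yu zu; rewrite !invrM ?unitrMl // mulrA.
split.
- by rewrite unitrV.
- by rewrite !unitrV.
- by rewrite -invM3 // braid invM3.
- exact: quintic_inv.
- exact: quintic_inv.
Qed.

Lemma omega_inv (R : comUnitRingType) (A : unitAlgType R) (s t : A) :
  s \is a GRing.unit -> t \is a GRing.unit -> omega s^-1 t^-1 = (omega s t)^-1.
Proof.
by move=> su tu; rewrite /omega invrM ?unitrMl ?unitrX // invrM ?unitrX // exprVn mulrA.
Qed.

Lemma u12121_mono (R : comUnitRingType) (A : unitAlgType R) (s s' t t' : A) :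
  msub (u1 s) (u1 s') -> msub (u2 t) (u2 t') -> msub (u12121 s t) (u12121 s' t').
Proof. by move=> ss' tt'; do 4 (apply: mprod_mono => //). Qed.

Lemma part_ii (R : comUnitRingType) (A : unitAlgType R) (a b c d e : R) (s t : A) :
  H5_rels a b c d e s t ->
  msub (mprod (mprod (u2 t) (u1 s)) (rline (t * s^-1 * t))) (target_ii s t).
Proof.
move=> rels; have rels' := H5_rels_inv rels.
case: rels => e_unit [s_unit t_unit] _ quintic_s quintic_t.
have u1_sub := usub_sub_inv s_unit e_unit quintic_s.
have u1_sub' := usub_inv_sub s_unit e_unit quintic_s.
have u2_sub := usub_sub_inv t_unit e_unit quintic_t.
have u2_sub' := usub_inv_sub t_unit e_unit quintic_t.
have := part_i rels'; rewrite /target_i omega_inv // !exprVn !invrK => sub_i z Hz.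
have := sub_i z (mprod_mono (mprod_mono u2_sub u1_sub) (@msubxx _ _ _) Hz).
apply: msum_mono; first exact: mprod_mono u1_sub' (@msubxx _ _ _).
exact: msum_mono (@msubxx _ _ _) (u12121_mono u1_sub' u2_sub').
Qed.

Theorem proposition4p4 (R : comUnitRingType) (A : unitAlgType R)
  (a b c d e : R) (s1 s2 : A) :
  H5_rels a b c d e s1 s2 ->
  (msub (mprod (mprod (u2 s2) (u1 s1)) (rline (s2^-1 * s1 * s2^-1)))
        (msum (u1x s1 ((omega s1 s2) ^- 2))
          (msum (rline (s2^-2 * s1^+2 * s2^-1 * s1 * s2^-1)) (u12121 s1 s2)))
   /\ msub (msum (u1x s1 ((omega s1 s2) ^- 2))
          (msum (rline (s2^-2 * s1^+2 * s2^-1 * s1 * s2^-1)) (u12121 s1 s2)))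
        (U'' s1 s2))
  /\
  (msub (mprod (mprod (u2 s2) (u1 s1)) (rline (s2 * s1^-1 * s2)))
        (msum (u1x s1 ((omega s1 s2) ^+ 2))
          (msum (rline (s2^+2 * s1^-2 * s2 * s1^-1 * s2)) (u12121 s1 s2)))
   /\ msub (msum (u1x s1 ((omega s1 s2) ^+ 2))
          (msum (rline (s2^+2 * s1^-2 * s2 * s1^-1 * s2)) (u12121 s1 s2)))
        (U'' s1 s2)).
Proof.
move=> rels; split; split.
- exact: part_i rels.
- exact: target_i_sub_U'' rels.
- exact: part_ii rels.
- exact: target_ii_sub_U'' rels.
Qed.
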